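(* Let $k=\overline{\mathbb Q}$ with the trivial valuation, $G=\operatorname{Spec}k[T]$ the additive group, $G^{\mathrm{an}}=\operatorname{Hom}_k(k[T],\mathbb T)$ with Berkovich's hyperoperation $\odot$, and $H=\{h\in G^{\mathrm{an}}: h(T)<0\}$. Then $H$ is closed under $\odot$, $(H,\odot)$ is a hypergroup, and the map $H\to\mathbb T_{<0}$, $h\mapsto h(T)$, is an isomorphism of hypergroups onto $\mathbb T_{<0}=\{a\in\mathbb T: a<0\}$ with the hyperaddition of $\mathbb T$ (i.e. a bijection $\phi$ with $\phi(f\odot g)=\phi(f)\oplus\phi(g)$).
   Context: $\mathbb T=\mathbb R\cup\{-\infty\}$ is the tropical hyperfield: multiplication is usual addition with $-\infty$ absorbing, hyperaddition $s\oplus t=\max\{s,t\}$ if $s\ne t$, $s\oplus s=\{u\in\mathbb T:u\le s\}$; $\mathbb T_{<0}$ (which contains $-\infty$) is closed under $\oplus$. $\operatorname{Hom}_k(B,\mathbb T)$ is the set of maps $\varphi:B\to\mathbb T$ with $\varphi(0)=-\infty$, $\varphi(1)=0$, $\varphi(xy)=\varphi(x)+\varphi(y)$, $\varphi(x+y)\in\varphi(x)\oplus\varphi(y)$, restricting to the trivial valuation on $k$ (nonzero elements $\mapsto0$). The Hopf algebra $A=k[T]$ has coproduct $\Delta(T)=T\otimes1+1\otimes T$; with $j_1(a)=a\otimes1$, $j_2(a)=1\otimes a$, $g\odot h=\{f\in\operatorname{Hom}_k(A,\mathbb T):\exists\beta\in\operatorname{Hom}_k(A\otimes_kA,\mathbb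 T),\ \beta\circ j_1=g,\ \beta\circ j_2=h,\ f=\beta\circ\Delta\}$. A hypergroup is a set with an associative hyperoperation $*$ having a unique identity $e$ ($e*x=x*e=\{x\}$), unique inverses ($e\in x*x^{-1}\cap x^{-1}*x$), and reversibility ($x\in y*z\Rightarrow y\in x*z^{-1},\ z\in y^{-1}*x$). *)

From Stdlib Require Import Reals.
From HB Require Import structures.
From mathcomp Require Import all_boot all_order all_algebra all_field.
Set Implicit Arguments. Unset Strict Implicit. Unset Printing Implicit Defensive.
Import GRing.Theory.
Local Open Scope ring_scope.

(* ---------- The tropical hyperfield T = R ∪ {-oo}; None = -oo ---------- *)
Definition Trop := option R.

Definition tle (s t : Trop) : Prop :=
  match s, t with
  | None, _ => True
  | Some _, None => False
  | Some a, Some b => Rle a b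
  end.

Definition tlt (s t : Trop) : Prop := tle s t /\ s <> t.

Definition tmul (s t : Trop) : Trop :=
  match s, t with
  | Some a, Some b => Some (Rplus a b)
  | _, _ => None
  end.

(* hyperaddition: thadd s t u  <->  u \in s (+) t *)
Definition thadd (s t : Trop) (u : Trop) : Prop :=
  (s = t /\ tle u s) \/
  (s <> t /\ ((tlt s t /\ u = t) \/ (tlt t s /\ u = s))).

Definition Tneg (a : Trop) : Prop := tlt a (Some R0).

(* ---------- Hom_k(B, T) for a commutative k-algebra B ----------
   emb : k -> B is the structure map of the k-algebra B. *)
Definition is_trop_hom (B : comNzRingType) (emb : algC -> B) (phi : B -> Trop)
  : Prop :=
  [/\ phi 0 = None,
      phi 1 = Some R0,
      (forall x y, phi (x * y) = tmul (phi x) (phi y)),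
      (forall x y, thadd (phi x) (phi y) (phi (x + y))) &
      (forall c : algC, c != 0 -> phi (emb c) = Some R0)].

(* A = k[T] = {poly algC};  A ⊗_k A = k[T1,T2] modelled as {poly {poly algC}}
   with the outer variable for the first factor and inner for the second. *)
Definition embA (c : algC) : {poly algC} := c%:P.
Definition embAA (c : algC) : {poly {poly algC}} := c%:P%:P.
Definition j1 (p : {poly algC}) : {poly {poly algC}} := map_poly polyC p.
Definition j2 (p : {poly algC}) : {poly {poly algC}} := p%:P.
(* coproduct: Delta(T) = T ⊗ 1 + 1 ⊗ T, extended as a k-algebra map *)
Definition Delta (p : {poly algC}) : {poly {poly algC}} :=
  (map_poly embAA p).[j1 'X + j2 'X].

Definition Gan (f : {poly algC} -> Trop) : Prop := is_trop_hom embA f.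

(* Berkovich hyperoperation: odot g h f  <->  f \in g ⊙ h *)
Definition odot (g h f : {poly algC} -> Trop) : Prop :=
  Gan f /\
  exists beta : {poly {poly algC}} -> Trop,
    [/\ is_trop_hom embAA beta,
        (forall p, beta (j1 p) = g p),
        (forall p, beta (j2 p) = h p) &
        (forall p, f p = beta (Delta p))].

Definition Hsub (h : {poly algC} -> Trop) : Prop := Gan h /\ tlt (h 'X) (Some R0).

(* ---------- Hypergroups (carrier given as a subset S of a type X) ----------
   op x y z  <->  z \in x * y *)
Section Hypergroup.
Variables (X : Type) (S : X -> Prop) (op : X -> X -> X -> Prop).

Definition hclosed : Prop := forall x y z, S x -> S y -> op x y z -> S z.

Definition hassoc : Prop :=
  forall x y z, S x -> S y -> S z ->
    forall w, (exists u, op x y u /\ op u z w) <-> (exists v, op y z v /\ op x v w).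

Definition hidentity (e : X) : Prop :=
  S e /\ forall x, S x ->
    (forall w, op e x w <-> w = x) /\ (forall w, op x e w <-> w = x).

Definition hinverse (e x y : X) : Prop := S y /\ op x y e /\ op y x e.

Definition is_hypergroup : Prop :=
  hclosed /\ hassoc /\
  exists e, hidentity e /\
    (forall e', hidentity e' -> e' = e) /\
    (forall x, S x -> exists y, hinverse e x y /\
        forall y', hinverse e x y' -> y' = y) /\
    (forall x y z y' z', S x -> S y -> S z ->
        hinverse e y y' -> hinverse e z z' ->
        op y z x -> op x z' y /\ op y' x z).
End Hypergroup.

(* A point h of H is determined by h(T): as h(T) < 0, every nonzero constant c
   strictly dominates p T, so h(c + p T) = 0 and h is fixed by induction on p.
   Points of k[T1, T2] are supplied by Gauss valuations: the monomial valuation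
   with T1 |-> u, T2 |-> v, precomposed with a substitution T1 |-> A, T2 |-> B,
   and every triple (s, t, a) with a in s (+) t is attained on (T1, T2, T1 + T2)
   by a suitable choice of u, v, A, B.  Hence h |-> h(T) identifies f (.) g with
   f(T) (+) g(T), and the hypergroup axioms transfer from T_{<0}, where, after
   exponentiating, they say that the maximum of three numbers is attained twice. *)

From Pilot Require Import Defs.
From Stdlib Require Import Reals Lra FunctionalExtensionality.
From mathcomp Require Import all_boot all_order all_algebra all_field.
From mathcomp Require Import ring.
Set Implicit Arguments. Unset Strict Implicit. Unset Printing Implicit Defensive.
Import GRing.Theory.
Delimit Scope R_scope with Re.

Section TropicalHyperfield.
Local Open Scope R_scope.

(* [texp] turns the max-plus structure of [Trop] into the max-times structure of
   [0, +oo), with -oo |-> 0; there [thadd] becomes [max_twice]. *)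
Definition texp (x : Trop) : R := if x is Some r then exp r else 0.

Lemma texp_ge0 x : 0 <= texp x.
Proof. by case: x => [r|] /=; [left; apply: exp_pos | lra]. Qed.

Lemma texp_inj : injective texp.
Proof.
case=> [a|] [b|] //= H; first by rewrite (exp_inv _ _ H).
- by have := exp_pos a; lra.
- by have := exp_pos b; lra.
Qed.

Lemma tle_texp x y : tle x y <-> texp x <= texp y.
Proof.
case: x => [a|]; case: y => [b|] /=; split => //; try lra.
- by case=> [H|->]; [left; apply: exp_increasing | lra].
- by case=> [H|H]; [left; apply: exp_lt_inv | right; apply: exp_inv].
- by have := exp_pos a; lra.
- by have := exp_pos b; lra.
Qed.

Lemma tlt_texp x y : tlt x y <-> texp x < texp y.
Proof.
rewrite /tlt tle_texp; split.
- by case=> [[//|H] Hxy]; case: Hxy; apply: texp_inj.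
- by move=> H; split; [lra | move=> Exy; rewrite Exy in H; lra].
Qed.

Lemma texp_tmul x y : texp (tmul x y) = texp x * texp y.
Proof. by case: x => [a|]; case: y => [b|] /=; rewrite ?exp_plus; lra. Qed.

Lemma texp0 : texp (Some R0) = 1.
Proof. exact: exp_0. Qed.

Definition max_twice (a b c : R) : Prop :=
  (a = b /\ c <= a) \/ (a = c /\ b <= a) \/ (b = c /\ a <= b).

Lemma thadd_texp x y z : thadd x y z <-> max_twice (texp x) (texp y) (texp z).
Proof.
rewrite /thadd /max_twice !tlt_texp !tle_texp; split.
- by case=> [[-> H]|[_ [[H ->]|[H ->]]]]; lra.
- case: (Req_dec (texp x) (texp y)) => [/texp_inj Exy|Nxy] H.
    by left; split => //; rewrite -Exy in H; lra.
  right; split; first by move=> Exy; apply: Nxy; rewrite Exy.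
  have := Rdichotomy _ _ Nxy.
  case: H => [[? _]|[[/texp_inj <- ?]|[/texp_inj <- ?]]] //.
  - by right; split=> //; lra.
  - by left; split=> //; lra.
Qed.

Lemma max_twiceC a b c : max_twice a b c -> max_twice b a c.
Proof. by rewrite /max_twice; lra. Qed.

Lemma max_twiceCr a b c : max_twice a b c -> max_twice a c b.
Proof. by rewrite /max_twice; lra. Qed.

Lemma max_twice_le a b c : max_twice a b c -> c <= Rmax a b.
Proof. by rewrite /max_twice; have := Rmax_l a b; have := Rmax_r a b; lra. Qed.

Lemma max_twice_scale k a b c :
  0 <= k -> max_twice a b c -> max_twice (k * a) (k * b) (k * c).
Proof.
move=> k_ge0 [[-> H]|[[-> H]|[-> H]]]; have := Rmult_le_compat_l _ _ _ k_ge0 H;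
  rewrite /max_twice; lra.
Qed.

Lemma max_twice_max a b c a' b' c' : max_twice a b c -> max_twice a' b' c' ->
  max_twice (Rmax a a') (Rmax b b') (Rmax c c').
Proof.
rewrite /max_twice /Rmax => H H'.
by do 3 case: Rle_dec => ?; lra.
Qed.

Lemma max_twice_scale_lt a b k c : b < a -> 0 <= k -> 0 <= c ->
  max_twice (a * k) (b * k) c -> c = a * k.
Proof.
move=> ba k_ge0 c_ge0; case: (Req_dec k 0) => [->|k_neq0].
  by rewrite !Rmult_0_r /max_twice; lra.
have := Rmult_lt_compat_r k b a ltac:(lra) ba.
by rewrite /max_twice; lra.
Qed.

Lemma max_twice_assoc a b c d u : max_twice a b u -> max_twice u c d ->
  exists2 v, v = a \/ v = b \/ v = c \/ v = d & max_twice b c v /\ max_twice a v d.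
Proof.
rewrite /max_twice => Habu Hucd.
case: (Rle_dec c b) => [cb|bc]; last by exists c; [tauto | lra].
case: (Rle_dec d b) => [db|bd]; last by exists b; [tauto | lra].
case: (Rle_dec a d) => [ad|da]; first by exists d; [tauto | lra].
by exists a; [tauto | lra].
Qed.

Lemma thaddC x y z : thadd x y z -> thadd y x z.
Proof. by rewrite !thadd_texp; apply: max_twiceC. Qed.

Lemma thaddCr x y z : thadd x y z -> thadd x z y.
Proof. by rewrite !thadd_texp; apply: max_twiceCr. Qed.

Lemma thadd0l y z : thadd None y z <-> z = y.
Proof.
rewrite thadd_texp /max_twice /=; split => [H|->]; last by have := texp_ge0 y; lra.
by apply: texp_inj; have := texp_ge0 y; have := texp_ge0 z; lra.
Qed.

Lemma thadd_eq0 x y : thadd x y None <-> x = y.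
Proof.
rewrite thadd_texp /max_twice /=; split => [H|->]; last by have := texp_ge0 y; lra.
by apply: texp_inj; have := texp_ge0 x; have := texp_ge0 y; lra.
Qed.

Lemma thadd_ltl x y z : tlt x y -> thadd x y z -> z = y.
Proof.
rewrite tlt_texp thadd_texp /max_twice => Lxy Hz.
by apply: texp_inj; lra.
Qed.

Lemma thadd_uniq x y a b : x <> y -> thadd x y a -> thadd x y b -> a = b.
Proof.
move=> Nxy; rewrite !thadd_texp /max_twice => Ha Hb; apply: texp_inj.
have := Rdichotomy _ _ (fun E => Nxy (texp_inj E)); lra.
Qed.

Lemma thadd_Tneg x y z : Tneg x -> Tneg y -> thadd x y z -> Tneg z.
Proof.
rewrite /Tneg !tlt_texp texp0 thadd_texp => x_lt1 y_lt1 /max_twice_le.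
by have := Rmax_lub_lt _ _ _ x_lt1 y_lt1; lra.
Qed.

Lemma thaddA_l x y z w u : thadd x y u -> thadd u z w ->
  exists v, thadd y z v /\ thadd x v w.
Proof.
rewrite !thadd_texp => Hxyu Huzw.
have [v Ev [Hyzv Hxvw]] := max_twice_assoc Hxyu Huzw.
have [t Et] : exists t, texp t = v by case: Ev => [|[|[|]]] ->; eexists.
by exists t; rewrite !thadd_texp Et.
Qed.

Lemma thaddA x y z w :
  (exists u, thadd x y u /\ thadd u z w) <-> (exists v, thadd y z v /\ thadd x v w).
Proof.
split=> [[u [Hxyu Huzw]]|[v [Hyzv Hxvw]]]; first exact: thaddA_l Hxyu Huzw.
have [u [Hyxu Hzuw]] := thaddA_l (thaddC Hyzv) (thaddC Hxvw).
by exists u; split; apply: thaddC.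
Qed.

Definition tmax (x y : Trop) : Trop := if Rle_dec (texp x) (texp y) then y else x.

Lemma texp_tmax x y : texp (tmax x y) = Rmax (texp x) (texp y).
Proof. by rewrite /tmax /Rmax; case: Rle_dec. Qed.

Lemma thadd_tmul c x y z : thadd x y z -> thadd (tmul c x) (tmul c y) (tmul c z).
Proof. by rewrite !thadd_texp !texp_tmul; apply/max_twice_scale/texp_ge0. Qed.

Lemma thadd_tmax x y z x' y' z' : thadd x y z -> thadd x' y' z' ->
  thadd (tmax x x') (tmax y y') (tmax z z').
Proof. by rewrite !thadd_texp !texp_tmax; apply: max_twice_max. Qed.

Lemma Tneg_hypergroup : is_hypergroup Tneg thadd.
Proof.
have Tneg0 : Tneg None by rewrite /Tneg tlt_texp texp0 /=; lra.
have id0 : hidentity Tneg thadd None.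
  split=> // x _; split=> w; first exact: thadd0l.
  by split=> [/thaddC/thadd0l | ->] //; apply/thaddC/thadd0l.
split; first by move=> x y z; apply: thadd_Tneg.
split; first by move=> x y z _ _ _ w; apply: thaddA.
exists None; split=> //; split.
  move=> e [_ /(_ None Tneg0) [/(_ e) He _]].
  by apply/He/thaddC/thadd0l.
split.
  move=> x Tx; exists x; split; first by split; rewrite ?thadd_eq0.
  by move=> y [_ [/thadd_eq0 <- _]].
move=> x y z y' z' _ _ _ [_ [/thadd_eq0 <- _]] [_ [/thadd_eq0 <- _]] Hyzx.
by split; [apply/thaddCr/thaddC/thaddCr | apply: thaddCr].
Qed.

End TropicalHyperfield.

Section HypergroupTransport.
Variables (X Y : Type) (S : X -> Prop) (T : Y -> Prop).
Variables (opX : X -> X -> X -> Prop) (opY : Y -> Y -> Y -> Prop) (phi : X -> Y).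
Hypothesis phi_in : forall x, S x -> T (phi x).
Hypothesis phi_inj : forall x y, S x -> S y -> phi x = phi y -> x = y.
Hypothesis phi_onto : forall b, T b -> exists2 x, S x & phi x = b.
Hypothesis opXE : forall {x y z}, S x -> S y ->
  opX x y z <-> S z /\ opY (phi x) (phi y) (phi z).

Lemma hidentity_transport e : S e -> hidentity T opY (phi e) -> hidentity S opX e.
Proof.
move=> Se [_ idY]; split=> // x Sx; have [idYl idYr] := idY _ (phi_in Sx).
split=> w; rewrite opXE //; split=> [[Sw]|->].
- by move/idYl/phi_inj; apply.
- by split=> //; apply/idYl.
- by move/idYr/phi_inj; apply.
- by split=> //; apply/idYr.
Qed.

Lemma hinverse_transport e x y : S e -> S x -> S y ->
  hinverse S opX e x y <-> hinverse T opY (phi e) (phi x) (phi y).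
Proof.
move=> Se Sx Sy; rewrite /hinverse !opXE //.
by split=> [[_ [[_ ?] [_ ?]]] | [_ [? ?]]]; split; auto.
Qed.

Lemma hassoc_transport : hclosed T opY -> hassoc T opY -> hassoc S opX.
Proof.
move=> closedY assocY x y z Sx Sy Sz w.
have lift a b c : S a -> S b -> opY (phi a) (phi b) c -> exists2 v, S v & phi v = c.
  by move=> Sa Sb /(closedY _ _ _ (phi_in Sa) (phi_in Sb)) /phi_onto.
have assocY' := assocY _ _ _ (phi_in Sx) (phi_in Sy) (phi_in Sz) (phi w).
split.
- move=> [u [/(opXE Sx Sy) [Su Hxyu] /(opXE Su Sz) [Sw Huzw]]].
  have [v' [Hyzv Hxvw]] := proj1 assocY' (ex_intro _ _ (conj Hxyu Huzw)).
  have [v Sv Ev] := lift _ _ _ Sy Sz Hyzv; rewrite -{}Ev in Hyzv Hxvw.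
  by exists v; rewrite !opXE.
- move=> [v [/(opXE Sy Sz) [Sv Hyzv] /(opXE Sx Sv) [Sw Hxvw]]].
  have [u' [Hxyu Huzw]] := proj2 assocY' (ex_intro _ _ (conj Hyzv Hxvw)).
  have [u Su Eu] := lift _ _ _ Sx Sy Hxyu; rewrite -{}Eu in Hxyu Huzw.
  by exists u; rewrite !opXE.
Qed.

Lemma is_hypergroup_transport : is_hypergroup T opY -> is_hypergroup S opX.
Proof.
move=> [closedY [assocY [eY [[TeY idY] [_ [invY revY]]]]]].
have [e Se Ee] := phi_onto TeY; subst eY.
have idX := hidentity_transport Se (conj TeY idY).
split; first by move=> x y z Sx Sy /(opXE Sx Sy) [].
split; first exact: hassoc_transport.
exists e; split=> //; split.
  move=> e' [Se' /(_ _ Se) [ide' _]]; case: idX => _ /(_ _ Se') [_ ide].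
  by symmetry; apply/ide/ide'.
split.
  move=> x Sx; have [yY [invxY uniqY]] := invY _ (phi_in Sx).
  have [y Sy Ey] := phi_onto (proj1 invxY); rewrite -{}Ey in invxY uniqY.
  exists y; split; first by rewrite hinverse_transport.
  move=> y' invxy'; have Sy' := proj1 invxy'.
  by apply: phi_inj => //; apply/uniqY; rewrite -hinverse_transport.
move=> x y z y' z' Sx Sy Sz invy invz Hyzx.
have Sy' := proj1 invy; have Sz' := proj1 invz.
rewrite hinverse_transport // in invy; rewrite hinverse_transport // in invz.
move/(opXE Sy Sz): Hyzx => [_ Hyzx].
have [? ?] := revY _ _ _ _ _ (phi_in Sx) (phi_in Sy) (phi_in Sz) invy invz Hyzx.
by rewrite !opXE.
Qed.

End HypergroupTransport.

Local Open Scope ring_scope.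

Lemma tmul_None x : tmul x None = None.
Proof. by case: x. Qed.

(* Horner form of the Gauss extension [sum_i c_i X^i |-> max_i (nu c_i + i w)]. *)
Definition gauss (K : comNzRingType) (nu : K -> Trop) (w : R) (P : {poly K}) : Trop :=
  foldr (fun c acc => tmax (nu c) (tmul (Some w) acc)) None P.

Section GaussExtension.
Variables (K : comNzRingType) (emb : algC -> K) (nu : K -> Trop) (w : R).
Hypothesis nu_hom : is_trop_hom emb nu.
Local Notation G := (gauss nu w).

Lemma gauss0 : G 0 = None.
Proof. by rewrite /gauss polyseq0. Qed.

Lemma gauss_cons P c : G (P * 'X + c%:P) = tmax (nu c) (tmul (Some w) (G P)).
Proof.
case: nu_hom => nu0 _ _ _ _.
rewrite -cons_poly_def /gauss polyseq_cons; case: nilP => [->|//].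
rewrite polyseqC; case: eqP => [->|_] //=.
by apply: texp_inj; rewrite texp_tmax nu0 /= Rmax_left //; apply: Rle_refl.
Qed.

Lemma gaussC c : G c%:P = nu c.
Proof.
rewrite -[c%:P]add0r -(mul0r 'X) gauss_cons gauss0 tmul_None.
by apply: texp_inj; rewrite texp_tmax Rmax_left //; apply: texp_ge0.
Qed.

Lemma gaussMX P : G (P * 'X) = tmul (Some w) (G P).
Proof.
case: nu_hom => nu0 _ _ _ _.
rewrite -[P * 'X]addr0 -polyC0 gauss_cons nu0.
by apply: texp_inj; rewrite texp_tmax Rmax_right //; apply: texp_ge0.
Qed.

Lemma gaussX : G 'X = Some w.
Proof.
case: nu_hom => _ nu1 _ _ _.
by rewrite -['X]mul1r gaussMX -polyC1 gaussC nu1 /= Rplus_0_r.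
Qed.

Lemma gaussD P Q : thadd (G P) (G Q) (G (P + Q)).
Proof.
case: nu_hom => _ _ _ nuD _.
elim/poly_ind: P Q => [|P a IH] Q; first by rewrite add0r gauss0; apply/thadd0l.
elim/poly_ind: Q => [|Q b _]; first by rewrite addr0 gauss0; apply/thaddC/thadd0l.
have -> : P * 'X + a%:P + (Q * 'X + b%:P) = (P + Q) * 'X + (a + b)%:P.
  by rewrite polyCD; ring.
by rewrite !gauss_cons; apply: thadd_tmax (nuD a b) (thadd_tmul _ (IH Q)).
Qed.

Lemma gaussZ c P : G (c%:P * P) = tmul (nu c) (G P).
Proof.
case: nu_hom => _ _ nuM _ _.
elim/poly_ind: P => [|P d IH]; first by rewrite mulr0 gauss0 tmul_None.
have -> : c%:P * (P * 'X + d%:P) = c%:P * P * 'X + (c * d)%:P by rewrite polyCM; ring.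
rewrite !gauss_cons IH nuM; apply: texp_inj.
rewrite !(texp_tmax, texp_tmul) /= -RmaxRmult; last exact: texp_ge0.
by rewrite Rmult_comm -Rmult_assoc (Rmult_comm (exp w)) Rmult_assoc.
Qed.

Lemma gauss_coef0 (P : {poly K}) : (texp (nu P`_0) <= texp (G P))%Re.
Proof.
case: nu_hom => nu0 _ _ _ _.
elim/poly_ind: P => [|P a _]; first by rewrite coef0 nu0 gauss0; apply: Rle_refl.
by rewrite coefD coefMX coefC /= add0r gauss_cons texp_tmax; apply: Rmax_l.
Qed.

Lemma gauss_le_mul P Q : (texp (G (P * Q)) <= texp (G P) * texp (G Q))%Re.
Proof.
elim/poly_ind: P => [|P a IH]; first by rewrite mul0r gauss0 /= Rmult_0_l; apply: Rle_refl.
have -> : (P * 'X + a%:P) * Q = P * Q * 'X + a%:P * Q by ring.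
have := gaussD (P * Q * 'X) (a%:P * Q).
rewrite thadd_texp gaussMX gaussZ !texp_tmul => /max_twice_le /Rle_trans; apply.
rewrite gauss_cons texp_tmax texp_tmul /=.
have := Rmax_l (texp (nu a)) (exp w * texp (G P)).
have := Rmax_r (texp (nu a)) (exp w * texp (G P)).
have := exp_pos w; have := texp_ge0 (G Q); have := texp_ge0 (nu a).
by move=> *; apply: Rmax_lub; nra.
Qed.

Lemma gauss_mul_dom P a Q :
  (texp (nu a) < exp w * texp (G P))%Re ->
  texp (G (P * Q)) = (texp (G P) * texp (G Q))%Re ->
  texp (G ((P * 'X + a%:P) * Q)) = (texp (G (P * 'X + a%:P)) * texp (G Q))%Re.
Proof.
move=> a_lt IH.
have -> : (P * 'X + a%:P) * Q = P * Q * 'X + a%:P * Q by ring.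
have := gaussD (P * Q * 'X) (a%:P * Q).
rewrite thadd_texp gaussMX gaussZ !texp_tmul IH /= -Rmult_assoc.
rewrite gauss_cons texp_tmax texp_tmul /= Rmax_right; last exact: Rlt_le.
by apply: max_twice_scale_lt => //; apply: texp_ge0.
Qed.

(* Unless the constant term of one factor is strictly dominated (then
   [gauss_mul_dom] applies), both factors take the value of their constant
   terms, and the product is squeezed between [gauss_coef0] and [gauss_le_mul]. *)
Lemma gaussM P Q : G (P * Q) = tmul (G P) (G Q).
Proof.
case: nu_hom => _ _ nuM _ _.
apply: texp_inj; rewrite texp_tmul.
elim/poly_ind: P Q => [|P a IHP] Q; first by rewrite mul0r gauss0 /= Rmult_0_l.
have [a_lt|a_ge] := Rlt_le_dec (texp (nu a)) (exp w * texp (G P)).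
  exact: gauss_mul_dom a_lt (IHP Q).
set P0 := P * 'X + a%:P.
elim/poly_ind: Q => [|Q b IHQ]; first by rewrite mulr0 gauss0 /= Rmult_0_r.
have [b_lt|b_ge] := Rlt_le_dec (texp (nu b)) (exp w * texp (G Q)).
  by rewrite mulrC Rmult_comm gauss_mul_dom // mulrC Rmult_comm.
have const_dom c R : (exp w * texp (G R) <= texp (nu c))%Re ->
    texp (G (R * 'X + c%:P)) = texp (nu c).
  by move=> ?; rewrite gauss_cons texp_tmax texp_tmul Rmax_left.
rewrite !const_dom //; apply: Rle_antisym.
  by have := gauss_le_mul P0 (Q * 'X + b%:P); rewrite !const_dom.
have := gauss_coef0 (P0 * (Q * 'X + b%:P)).
by rewrite coef0M !coefD !coefMX !coefC /= !add0r nuM texp_tmul.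
Qed.

Lemma gauss_trop_hom : is_trop_hom (fun c => (emb c)%:P) G.
Proof.
case: nu_hom => _ nu1 _ _ nuE; split.
- exact: gauss0.
- by rewrite -polyC1 gaussC.
- exact: gaussM.
- exact: gaussD.
- by move=> c c_neq0; rewrite gaussC nuE.
Qed.

End GaussExtension.

Lemma trop_hom_N (B : comNzRingType) (emb : algC -> B) (phi : B -> Trop) x :
  is_trop_hom emb phi -> phi (- x) = phi x.
Proof.
case=> _ phi1 phiM _ _.
have phiN1 : phi (-1) = Some R0.
  have := phiM (-1) (-1); rewrite mulrNN mulr1 phi1.
  by case: (phi (-1)) => //= r [r2]; congr Some; lra.
by rewrite -mulN1r phiM phiN1; case: (phi x) => //= r; rewrite Rplus_0_l.
Qed.

Lemma trop_hom_comp (B B' : comNzRingType) (emb : algC -> B) (emb' : algC -> B')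
    (psi : {rmorphism B -> B'}) (phi : B' -> Trop) :
  (forall c, psi (emb c) = emb' c) -> is_trop_hom emb' phi -> is_trop_hom emb (phi \o psi).
Proof.
move=> psi_emb [phi0 phi1 phiM phiD phiE]; split=> /=.
- by rewrite rmorph0.
- by rewrite rmorph1.
- by move=> x y; rewrite rmorphM.
- by move=> x y; rewrite rmorphD.
- by move=> c c_neq0; rewrite psi_emb phiE.
Qed.

Definition trivial_val (F : idomainType) (x : F) : Trop := if x == 0 then None else Some R0.

Lemma trivial_val_trop_hom : is_trop_hom id (@trivial_val algC).
Proof.
rewrite /trivial_val; split=> [||x y|x y|c /negPf -> //].
- by rewrite eqxx.
- by rewrite oner_eq0.
- by rewrite mulf_eq0; do 2 case: eqP => _ //=; rewrite Rplus_0_r.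
case: (x =P 0) => [->|/eqP/negPf x_neq0]; first by rewrite add0r; apply/thadd0l.
case: (y =P 0) => [->|_]; first by rewrite addr0 x_neq0; apply/thaddC/thadd0l.
rewrite thadd_texp texp0 /max_twice.
by case: eqP => _; rewrite ?texp0 /=; lra.
Qed.

Definition gauss_pt (v : R) : {poly algC} -> Trop := gauss (@trivial_val algC) v.

Definition gauss_pt2 (u v : R) : {poly {poly algC}} -> Trop := gauss (gauss_pt v) u.

Lemma gauss_pt_Gan v : Gan (gauss_pt v).
Proof. exact: gauss_trop_hom trivial_val_trop_hom. Qed.

Lemma gauss_ptX v : gauss_pt v 'X = Some v.
Proof. exact: gaussX trivial_val_trop_hom. Qed.

Lemma gauss_pt2_trop_hom u v : is_trop_hom embAA (gauss_pt2 u v).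
Proof. exact: gauss_trop_hom (gauss_pt_Gan v). Qed.

Lemma gauss_pt2X u v : gauss_pt2 u v 'X = Some u.
Proof. exact: gaussX (gauss_pt_Gan v). Qed.

Lemma gauss_pt2XC u v : gauss_pt2 u v 'X%:P = Some v.
Proof. by rewrite /gauss_pt2 (gaussC _ (gauss_pt_Gan v)) gauss_ptX. Qed.

Lemma Gan_le0 f p : Gan f -> tle (f 'X) (Some R0) -> tle (f p) (Some R0).
Proof.
move=> [f0 _ fM fD fE]; rewrite !tle_texp texp0 => fX_le1.
elim/poly_ind: p => [|p c IH]; first by rewrite f0 /=; lra.
have fc_le1 : (texp (f c%:P) <= 1)%Re.
  case: (c =P 0) => [->|/eqP c_neq0]; first by rewrite f0 /=; lra.
  by have := fE c c_neq0; rewrite /embA => ->; rewrite texp0; lra.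
have := fD (p * 'X) c%:P; rewrite thadd_texp fM texp_tmul => /max_twice_le le_max.
apply: (Rle_trans _ _ _ le_max); apply: Rmax_lub => //.
by have := texp_ge0 (f p); have := texp_ge0 (f 'X); nra.
Qed.

Lemma Gan_cons f p c : Gan f -> tlt (f 'X) (Some R0) -> c != 0 ->
  f (p * 'X + c%:P) = Some R0.
Proof.
move=> Gf fX_lt0 c_neq0; have [_ _ fM fD fE] := Gf.
have := fD (p * 'X) c%:P; rewrite [f c%:P](fE c c_neq0); apply: thadd_ltl.
have /tle_texp := Gan_le0 p Gf (proj1 fX_lt0).
move: fX_lt0; rewrite fM !tlt_texp texp_tmul texp0 => ? ?.
by have := texp_ge0 (f p); have := texp_ge0 (f 'X); nra.
Qed.

Lemma Gan_eq f g : Gan f -> Gan g -> tlt (f 'X) (Some R0) -> f 'X = g 'X -> f = g.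
Proof.
move=> Gf Gg fX_lt0 fgX; have gX_lt0 : tlt (g 'X) (Some R0) by rewrite -fgX.
apply: functional_extensionality; elim/poly_ind => [|p c IH].
  by case: Gf Gg => [f0 _ _ _ _] [g0 _ _ _ _]; rewrite f0 g0.
case: (c =P 0) => [->|/eqP c_neq0]; last by rewrite !Gan_cons.
by case: Gf Gg => [_ _ fM _ _] [_ _ gM _ _]; rewrite polyC0 addr0 fM gM IH fgX.
Qed.

Lemma Gan_exists a : exists2 h, Gan h & h 'X = a.
Proof.
case: a => [x|]; first by exists (gauss_pt x); [apply: gauss_pt_Gan | apply: gauss_ptX].
exists (@trivial_val algC \o horner_eval 0).
  apply: (trop_hom_comp (psi := horner_eval 0)) trivial_val_trop_hom => c.
  by rewrite /embA /= /horner_eval hornerC.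
by rewrite /= /horner_eval hornerX /trivial_val eqxx.
Qed.

Lemma trop_hom_j1 beta : is_trop_hom embAA beta -> Gan (beta \o j1).
Proof. by apply: (trop_hom_comp (psi := map_poly polyC)) => c; rewrite /embA /= map_polyC. Qed.

Lemma trop_hom_j2 beta : is_trop_hom embAA beta -> Gan (beta \o j2).
Proof. exact: (trop_hom_comp (psi := polyC)). Qed.

(* Plain [Delta] would be the discriminant from Reals. *)
Lemma trop_hom_Delta beta : is_trop_hom embAA beta -> Gan (beta \o Defs.Delta).
Proof.
apply: (trop_hom_comp (psi := horner_eval (j1 'X + j2 'X) \o map_poly (polyC \o polyC))).
by move=> c; rewrite /= map_polyC /horner_eval hornerC.
Qed.

Lemma j1X : j1 'X = 'X.
Proof. exact: map_polyX. Qed.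

Lemma DeltaX : Defs.Delta 'X = 'X + 'X%:P.
Proof. by rewrite /Defs.Delta (map_polyX (polyC \o polyC)) hornerX j1X. Qed.

Lemma odot_trop_hom f g beta : Hsub f -> Hsub g -> is_trop_hom embAA beta ->
  beta 'X = f 'X -> beta 'X%:P = g 'X -> odot f g (beta \o Defs.Delta).
Proof.
move=> [Gf fX_lt0] [Gg gX_lt0] beta_hom bX bXC.
split; first exact: trop_hom_Delta.
exists beta; split=> // p.
- by rewrite (Gan_eq Gf (trop_hom_j1 beta_hom) fX_lt0) //= j1X bX.
- by rewrite (Gan_eq Gg (trop_hom_j2 beta_hom) gX_lt0) //= bXC.
Qed.

Definition subst2 (A B : {poly {poly algC}}) :
    {rmorphism {poly {poly algC}} -> {poly {poly algC}}} :=
  horner_eval A \o map_poly (horner_eval B \o map_poly (polyC \o @polyC algC)).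

Lemma subst2_embAA A B c : subst2 A B (embAA c) = embAA c.
Proof. by rewrite /subst2 /embAA /= map_polyC /= map_polyC /= /horner_eval !hornerC. Qed.

Lemma subst2X A B : subst2 A B 'X = A.
Proof. by rewrite /subst2 /= map_polyX /horner_eval hornerX. Qed.

Lemma subst2XC A B : subst2 A B 'X%:P = B.
Proof. by rewrite /subst2 /= map_polyC /= map_polyX /horner_eval hornerX hornerC. Qed.

Lemma gauss_pt2_X_subXC u v : (u <= v)%Re -> gauss_pt2 u v ('X - 'X%:P) = Some v.
Proof.
move=> uv; have [_ hom1 _ _ _] := gauss_pt2_trop_hom u v.
have -> : 'X - 'X%:P = 1 * 'X + (- 'X)%:P :> {poly {poly algC}} by rewrite mul1r polyCN.
rewrite /gauss_pt2 (gauss_cons _ (gauss_pt_Gan v)) -/(gauss_pt2 u v) hom1.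
rewrite (trop_hom_N _ (gauss_pt_Gan v)) gauss_ptX.
apply: texp_inj; rewrite texp_tmax /= Rplus_0_r Rmax_left //.
exact: (proj1 (tle_texp (Some u) (Some v)) uv).
Qed.

(* When s = t = Some x, a value z <= x is attained by T1 - T2 and T2 at the
   point (z, x), and -oo by T1 and -T1. *)
Lemma thadd_gauss_pt2 s t a : thadd s t a ->
  exists u v A B, [/\ gauss_pt2 u v A = s, gauss_pt2 u v B = t & gauss_pt2 u v (A + B) = a].
Proof.
move=> Hsta; have val0 u v : gauss_pt2 u v 0 = None by case: (gauss_pt2_trop_hom u v).
case: (Req_dec (texp s) (texp t)) => [/texp_inj Est|Nst]; last first.
  have [u [A sA]] : exists u A, forall v, gauss_pt2 u v A = s.
    by case: s {Hsta Nst} => [x|]; [exists x, 'X => ?; rewrite gauss_pt2X | exists R0, 0].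
  have [v [B tB]] : exists v B, forall u, gauss_pt2 u v B = t.
    by case: t {Hsta Nst} => [y|]; [exists y, 'X%:P => ?; rewrite gauss_pt2XC | exists R0, 0].
  exists u, v, A, B; split=> //; apply: (thadd_uniq (a := gauss_pt2 u v (A + B)) _ _ Hsta).
  - by move=> Est; apply: Nst; rewrite Est.
  - by rewrite -(sA v) -(tB u); case: (gauss_pt2_trop_hom u v) => _ _ _ hD _; apply: hD.
subst t; case: s Hsta => [x|] Hsta; last first.
  by exists R0, R0, 0, 0; rewrite addr0 val0; move/thadd0l: Hsta => ->.
case: a Hsta => [z|] Hsta.
  have zx : (z <= x)%Re by case: Hsta => [[_ //]|[]].
  exists z, x, ('X - 'X%:P), 'X%:P.
  by rewrite subrK gauss_pt2X gauss_pt2XC gauss_pt2_X_subXC.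
exists x, x, 'X, (- 'X); rewrite addrN val0 gauss_pt2X; split=> //.
by rewrite (trop_hom_N _ (gauss_pt2_trop_hom x x)) gauss_pt2X.
Qed.

Lemma odot_thadd f g w : odot f g w -> thadd (f 'X) (g 'X) (w 'X).
Proof.
move=> [_ [beta [[_ _ _ betaD _] beta_j1 beta_j2 beta_Delta]]].
by rewrite beta_Delta DeltaX -beta_j1 -beta_j2 j1X; apply: betaD.
Qed.

Lemma odotE f g w : Hsub f -> Hsub g ->
  odot f g w <-> Hsub w /\ thadd (f 'X) (g 'X) (w 'X).
Proof.
move=> Hf Hg; split=> [fgw | [[Gw wX_lt0] fgwX]].
  have fgwX := odot_thadd fgw; split=> //; split; first by case: fgw.
  by apply: thadd_Tneg fgwX; [case: Hf | case: Hg].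
have [u [v [A [B [uA vB uAB]]]]] := thadd_gauss_pt2 fgwX.
pose beta := gauss_pt2 u v \o subst2 A B.
have beta_hom : is_trop_hom embAA beta.
  exact: trop_hom_comp (subst2_embAA A B) (gauss_pt2_trop_hom u v).
have fgw' : odot f g (beta \o Defs.Delta).
  apply: (odot_trop_hom Hf Hg beta_hom).
  - rewrite -uA; exact: (congr1 (gauss_pt2 u v) (subst2X A B)).
  - rewrite -vB; exact: (congr1 (gauss_pt2 u v) (subst2XC A B)).
suff -> : w = beta \o Defs.Delta by [].
apply: Gan_eq Gw (trop_hom_Delta beta_hom) wX_lt0 _.
by rewrite -uAB /beta /comp DeltaX rmorphD subst2X subst2XC.
Qed.

Theorem proposition5p28 :
  hclosed Hsub odot /\
  is_hypergroup Hsub odot /\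
  (forall h, Hsub h -> Tneg (h 'X)) /\
  (forall f g, Hsub f -> Hsub g -> f 'X = g 'X -> f = g) /\
  (forall a, Tneg a -> exists h, Hsub h /\ h 'X = a) /\
  (forall f g, Hsub f -> Hsub g ->
     forall a, (exists w, odot f g w /\ w 'X = a) <-> thadd (f 'X) (g 'X) a).
Proof.
have Hsub_inj f g : Hsub f -> Hsub g -> f 'X = g 'X -> f = g.
  by move=> [Gf fX_lt0] [Gg _]; apply: Gan_eq Gf Gg fX_lt0.
have Hsub_onto a : Tneg a -> exists2 h, Hsub h & h 'X = a.
  by move=> a_lt0; have [h Gh hX] := Gan_exists a; exists h; rewrite /Hsub ?hX.
have Hsub_hypergroup : is_hypergroup Hsub odot.
  apply: (is_hypergroup_transport (phi := fun h => h 'X)) Tneg_hypergroup => //.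
    by move=> h [].
  by move=> f g w Hf Hg; apply: odotE.
split; first by case: Hsub_hypergroup.
split; first exact: Hsub_hypergroup.
split; first by move=> h [].
split; first exact: Hsub_inj.
split; first by move=> a /Hsub_onto [h]; exists h.
move=> f g Hf Hg a; split=> [[w [/odot_thadd fgw <-]] // | fga].
have [w Hw wX] := Hsub_onto a (thadd_Tneg (proj2 Hf) (proj2 Hg) fga).
by exists w; split=> //; apply/odotE; rewrite ?wX.
Qed.
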